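(* Let $h_{00},h_{11},h_{22},h_{33}>0$, $\det h = h_{00}h_{11}h_{22}h_{33}$, $\beta=\frac{1}{6(\det h)^2}$, and $p(x,y)=x^4+x^3y+xy^3+y^4$, $q(x,y)=5x^4+3x^3y-xy^3-3y^4$. Consider $\dot g_{00} = -\beta\, p(-g_{11},g_{22})\, g_{00}^3$, $\dot g_{11} = -\beta\, q(-g_{11},g_{22})\, g_{00}^2 g_{11}$, $\dot g_{22} = -\beta\, q(g_{22},-g_{11})\, g_{00}^2 g_{22}$, $\dot g_{33} = 3\beta\, p(-g_{11},g_{22})\, g_{00}^2 g_{33}$, with $g_{ii}(0)=h_{ii}$. Then the solution exists for all $t\ge0$, $g_{33}$ is nondecreasing, and $(g_{11}g_{22})^{25} = \eta\,(g_{22}+g_{11})^4(2g_{22}^2-g_{11}g_{22}+2g_{11}^2)^3$ with $\eta = \frac{(h_{11}h_{22})^{25}}{(h_{22}+h_{11})^4(2h_{22}^2-h_{11}h_{22}+2h_{11}^2)^3}$. As $t\to\infty$: $g_{11},g_{22}\to(432\eta)^{1/40}$, $g_{00}\to \left(\frac{h_{00}^3h_{33}}{\det h}\right)^{1/2}(432\eta)^{1/40}$, $g_{33}\to\left(\frac{(\det h)^3}{h_{00}^3h_{33}}\right)^{1/2}(432\eta)^{-3/40}$. If $h_{11}=h_{22}$ the solution is constant. If $h_{11}<h_{22}$, then $g_{11}<g_{22}$ for all $t$, $g_{11}$ is increasing and $g_{22}$ is decreasing.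
   Context: This system is Bach flow $\partial_t g = B$, $g(0)=h$, on $\mathbb{R}\times E(2)$ ($E(2)$ the universal cover of the group of Euclidean motions of the plane) written in a diagonalizing basis: a left-invariant frame $\{\partial_0,e_1,e_2,e_3\}$ with $[e_i,e_j]=\sum \varepsilon_{ijl}E^{lk}e_k$, $E=\mathrm{diag}(-1,-1,0)$, in which the product metric is $g=\mathrm{diag}(g_{00},g_{11},g_{22},g_{33})$; $B$ is the Bach tensor. Along the flow $g_{00}g_{11}g_{22}g_{33}=\det h$ is constant. *)

From Stdlib Require Import Reals.
Open Scope R_scope.

Definition pp (x y : R) : R := x^4 + x^3 * y + x * y^3 + y^4.
Definition qq (x y : R) : R := 5 * x^4 + 3 * x^3 * y - x * y^3 - 3 * y^4.

Definition beta (h0 h1 h2 h3 : R) : R := 1 / (6 * (h0 * h1 * h2 * h3) ^ 2).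

(* The derivative at t is the ordinary (two-sided) derivative of a function
   R -> R; values for t < 0 are irrelevant except for a neighbourhood of 0. *)
Definition is_solution (h0 h1 h2 h3 : R) (g0 g1 g2 g3 : R -> R) : Prop :=
  g0 0 = h0 /\ g1 0 = h1 /\ g2 0 = h2 /\ g3 0 = h3 /\
  forall t, 0 <= t ->
    derivable_pt_lim g0 t
      (- beta h0 h1 h2 h3 * pp (- g1 t) (g2 t) * (g0 t) ^ 3) /\
    derivable_pt_lim g1 t
      (- beta h0 h1 h2 h3 * qq (- g1 t) (g2 t) * (g0 t) ^ 2 * g1 t) /\
    derivable_pt_lim g2 t
      (- beta h0 h1 h2 h3 * qq (g2 t) (- g1 t) * (g0 t) ^ 2 * g2 t) /\
    derivable_pt_lim g3 t
      (3 * beta h0 h1 h2 h3 * pp (- g1 t) (g2 t) * (g0 t) ^ 2 * g3 t).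

Definition tends_at_infty (f : R -> R) (l : R) : Prop :=
  forall eps, 0 < eps -> exists M, forall t, M <= t -> Rabs (f t - l) < eps.

Definition eta_of (h1 h2 : R) : R :=
  (h1 * h2) ^ 25 / ((h2 + h1) ^ 4 * (2 * h2 ^ 2 - h1 * h2 + 2 * h1 ^ 2) ^ 3).

From Stdlib Require Import Reals Lra Psatz ClassicalEpsilon.
From Coquelicot Require Import Coquelicot.
Open Scope R_scope.

(* Three quantities are conserved: [g0^2 / (g1 g2)], [g0^3 g3] and [eta_of g1 g2]. They
   give the [eta] identity and reduce the limits of [g0] and [g3] to those of [g1], [g2].
   The gap [g2 - g1] solves a linear equation, so its sign is preserved; for [h1 < h2],
   [g1] increases and [g2] decreases, both converge, and a positive limiting gap would
   make [g1] grow linearly. Hence [g1], [g2] share a limit [L], and the [eta] invariant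
   at [(L, L)] reads [L^40 = 432 eta].
   For existence, the invariants express the whole solution through the ratio
   [r = g2 / g1], which obeys an autonomous equation [r' = V r] with [V < 0] on
   [(1, oo)] vanishing linearly at [1]; it is solved for all times by inverting
   [r |-> int dr / V r], which diverges at [1]. *)

(* The Stdlib differentiation rules, restated on eta-expanded functions so that
   [eapply] matches them against goals. *)
Lemma dpl_eq f x l l' : derivable_pt_lim f x l -> l = l' -> derivable_pt_lim f x l'.
Proof. now intros H <-. Qed.

Lemma dpl_const c x : derivable_pt_lim (fun _ => c) x 0.
Proof. apply derivable_pt_lim_const. Qed.

Lemma dpl_opp (f : R -> R) x l :
  derivable_pt_lim f x l -> derivable_pt_lim (fun s => - f s) x (- l).
Proof. intros; now apply (derivable_pt_lim_opp f). Qed.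

Lemma dpl_plus (f g : R -> R) x lf lg :
  derivable_pt_lim f x lf -> derivable_pt_lim g x lg ->
  derivable_pt_lim (fun s => f s + g s) x (lf + lg).
Proof. intros; now apply (derivable_pt_lim_plus f g). Qed.

Lemma dpl_minus (f g : R -> R) x lf lg :
  derivable_pt_lim f x lf -> derivable_pt_lim g x lg ->
  derivable_pt_lim (fun s => f s - g s) x (lf - lg).
Proof. intros; now apply (derivable_pt_lim_minus f g). Qed.

Lemma dpl_mult (f g : R -> R) x lf lg :
  derivable_pt_lim f x lf -> derivable_pt_lim g x lg ->
  derivable_pt_lim (fun s => f s * g s) x (lf * g x + f x * lg).
Proof. intros; now apply (derivable_pt_lim_mult f g). Qed.

Lemma dpl_comp (f g : R -> R) x lg lf :
  derivable_pt_lim g x lg -> derivable_pt_lim f (g x) lf ->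
  derivable_pt_lim (fun s => f (g s)) x (lf * lg).
Proof. intros; now apply (derivable_pt_lim_comp g f). Qed.

Lemma dpl_pow (g : R -> R) n x l : derivable_pt_lim g x l ->
  derivable_pt_lim (fun s => g s ^ n) x (INR n * g x ^ pred n * l).
Proof.
  intros H. eapply dpl_eq; [exact (dpl_comp _ g x _ _ H (derivable_pt_lim_pow (g x) n))|].
  ring.
Qed.

Lemma dpl_ln (g : R -> R) x l : 0 < g x -> derivable_pt_lim g x l ->
  derivable_pt_lim (fun s => ln (g s)) x (l / g x).
Proof.
  intros Hg H. eapply dpl_eq; [exact (dpl_comp ln g x _ _ H (derivable_pt_lim_ln _ Hg))|].
  unfold Rdiv; ring.
Qed.

Lemma dpl_exp_scal k x : derivable_pt_lim (fun s => exp (k * s)) x (k * exp (k * x)).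
Proof.
  eapply dpl_eq.
  - apply (dpl_comp exp (fun s => k * s)); [|apply derivable_pt_lim_exp].
    apply (dpl_mult (fun _ => k) (fun s => s)); [apply dpl_const | apply derivable_pt_lim_id].
  - ring.
Qed.

Lemma dpl_continuity_pt f x l : derivable_pt_lim f x l -> continuity_pt f x.
Proof. intros H; apply derivable_continuous_pt; now exists l. Qed.

Ltac derive_rules :=
  repeat first [ eassumption | apply dpl_mult | apply dpl_plus | apply dpl_minus | apply dpl_opp
               | apply dpl_pow | apply dpl_ln | apply dpl_const | apply derivable_pt_lim_id ].

Lemma le_of_deriv_nonneg (f f' : R -> R) a b : a <= b ->
  (forall c, a <= c <= b -> derivable_pt_lim f c (f' c)) ->
  (forall c, a <= c <= b -> 0 <= f' c) -> f a <= f b.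
Proof.
  intros Hab Hd Hp. destruct (Req_dec a b) as [->|Hne]; [lra|].
  destruct (MVT_cor2 f f' a b) as [c [Hc1 Hc2]]; [lra|assumption|].
  assert (0 <= f' c) by (apply Hp; lra). nra.
Qed.

Lemma lt_of_deriv_pos (f f' : R -> R) a b : a < b ->
  (forall c, a <= c <= b -> derivable_pt_lim f c (f' c)) ->
  (forall c, a <= c <= b -> 0 < f' c) -> f a < f b.
Proof.
  intros Hab Hd Hp.
  destruct (MVT_cor2 f f' a b) as [c [Hc1 Hc2]]; [lra|assumption|].
  assert (0 < f' c) by (apply Hp; lra). nra.
Qed.

Lemma ge_of_deriv_nonpos (f f' : R -> R) a b : a <= b ->
  (forall c, a <= c <= b -> derivable_pt_lim f c (f' c)) ->
  (forall c, a <= c <= b -> f' c <= 0) -> f b <= f a.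
Proof.
  intros Hab Hd Hp.
  enough (- f a <= - f b) by lra.
  apply (le_of_deriv_nonneg (fun s => - f s) (fun s => - f' s)); auto.
  - intros; now apply dpl_opp, Hd.
  - intros c Hc; specialize (Hp c Hc); lra.
Qed.

Lemma const_of_deriv_zero (f : R -> R) :
  (forall t, 0 <= t -> derivable_pt_lim f t 0) -> forall t, 0 <= t -> f t = f 0.
Proof.
  intros Hd t Ht. apply Rle_antisym.
  - apply (ge_of_deriv_nonpos f (fun _ => 0)); auto; intros; [apply Hd|]; lra.
  - apply (le_of_deriv_nonneg f (fun _ => 0)); auto; intros; [apply Hd|]; lra.
Qed.

Section LinearODE.

Variables u a : R -> R.
Hypothesis u_deriv : forall t, 0 <= t -> derivable_pt_lim u t (a t * u t).
Hypothesis a_cont : forall t, 0 <= t -> continuity_pt a t.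

(* Gronwall: with [|a| <= k/2] on [0, T], [u^2 exp (k s)] increases and
   [u^2 exp (- k s)] decreases there. *)
Lemma linear_ode_sq_bounds T : 0 <= T ->
  exists k, u 0 ^ 2 * exp (- (k * T)) <= u T ^ 2 <= u 0 ^ 2 * exp (k * T).
Proof.
  intros HT.
  destruct (continuity_ab_maj (fun t => Rabs (a t)) 0 T HT) as [m [Hm _]].
  { intros t Ht. apply (continuity_pt_comp a Rabs); [apply a_cont; lra | apply Rcontinuity_abs]. }
  exists (2 * Rabs (a m)).
  assert (Ha : forall t, 0 <= t <= T -> - Rabs (a m) <= a t <= Rabs (a m))
    by (intros t Ht; apply Rabs_le_between, Hm, Ht).
  assert (Hsq : forall k s, 0 <= s <= T -> derivable_pt_lim (fun s => u s ^ 2 * exp (k * s)) s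
                 ((2 * a s + k) * u s ^ 2 * exp (k * s))).
  { intros k s Hs. eapply dpl_eq.
    - apply (dpl_mult (fun s => u s ^ 2)); [apply dpl_pow, u_deriv; lra | apply dpl_exp_scal].
    - simpl; ring. }
  assert (Hexp : forall s, 0 < exp s) by apply exp_pos.
  split.
  - assert (H := le_of_deriv_nonneg _ _ 0 T HT (Hsq (2 * Rabs (a m)))).
    cbv beta in H; rewrite Rmult_0_r, exp_0, Rmult_1_r in H.
    assert (u 0 ^ 2 <= u T ^ 2 * exp (2 * Rabs (a m) * T)).
    { apply H. intros s Hs. specialize (Ha s Hs). specialize (Hexp (2 * Rabs (a m) * s)).
      apply Rmult_le_pos; [|lra]. apply Rmult_le_pos; [lra | apply pow2_ge_0]. }
    rewrite exp_Ropp. apply Rmult_le_reg_r with (exp (2 * Rabs (a m) * T)); [apply exp_pos|].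
    field_simplify; [lra | specialize (Hexp (2 * Rabs (a m) * T)); lra].
  - assert (H := ge_of_deriv_nonpos _ _ 0 T HT (Hsq (- (2 * Rabs (a m))))).
    cbv beta in H; rewrite Rmult_0_r, exp_0, Rmult_1_r in H.
    assert (u T ^ 2 * exp (- (2 * Rabs (a m)) * T) <= u 0 ^ 2).
    { apply H. intros s Hs. specialize (Ha s Hs). specialize (Hexp (- (2 * Rabs (a m)) * s)).
      enough (0 <= (2 * Rabs (a m) - 2 * a s) * u s ^ 2 * exp (- (2 * Rabs (a m)) * s)) by lra.
      apply Rmult_le_pos; [|lra]. apply Rmult_le_pos; [lra | apply pow2_ge_0]. }
    replace (- (2 * Rabs (a m)) * T) with (- (2 * Rabs (a m) * T)) in H0 by ring.
    rewrite exp_Ropp in H0. specialize (Hexp (2 * Rabs (a m) * T)).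
    replace (u T ^ 2) with (u T ^ 2 * / exp (2 * Rabs (a m) * T) * exp (2 * Rabs (a m) * T))
      by (field; lra).
    apply Rmult_le_compat_r; lra.
Qed.

Lemma linear_ode_zero : u 0 = 0 -> forall t, 0 <= t -> u t = 0.
Proof.
  intros H0 t Ht. destruct (linear_ode_sq_bounds t Ht) as [k [_ Hk]].
  rewrite H0 in Hk. simpl in Hk. nra.
Qed.

Lemma linear_ode_pos : 0 < u 0 -> forall t, 0 <= t -> 0 < u t.
Proof.
  intros H0.
  assert (Hnz : forall t, 0 <= t -> u t <> 0).
  { intros t Ht Hz. destruct (linear_ode_sq_bounds t Ht) as [k [Hk _]].
    rewrite Hz in Hk. assert (0 < exp (- (k * t))) by apply exp_pos.
    assert (0 < u 0 ^ 2) by (apply pow_lt; lra). simpl in Hk. nra. }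
  intros t Ht. destruct (Rlt_or_le 0 (u t)) as [|Hle]; auto. exfalso.
  assert (u t < 0) by (destruct Hle as [|E]; auto; exfalso; now apply (Hnz t)).
  destruct (Req_dec t 0) as [->|Ht0]; [lra|].
  destruct (Ranalysis5.IVT_interv (fun s => - u s) 0 t) as [z [Hz1 Hz2]]; try lra.
  - intros s Hs. apply continuity_pt_opp, (dpl_continuity_pt _ _ _ (u_deriv s ltac:(lra))).
  - apply (Hnz z); lra.
Qed.

End LinearODE.

Lemma tends_at_infty_is_lim f l : tends_at_infty f l <-> is_lim f p_infty l.
Proof.
  rewrite <- is_lim_spec. unfold tends_at_infty, is_lim'. simpl. split.
  - intros H eps. destruct (H eps (cond_pos eps)) as [M HM]. exists M.
    intros; apply HM; lra.
  - intros H eps Heps. destruct (H (mkposreal eps Heps)) as [M HM]. exists (M + 1).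
    intros; apply HM; lra.
Qed.

Lemma nondecreasing_bounded_tends (f : R -> R) B :
  (forall s t, 0 <= s -> s <= t -> f s <= f t) -> (forall t, 0 <= t -> f t <= B) ->
  exists l, tends_at_infty f l /\ (forall t, 0 <= t -> f t <= l) /\
    (forall M, (forall t, 0 <= t -> f t <= M) -> l <= M).
Proof.
  intros Hm HB.
  set (E := fun y => exists t, 0 <= t /\ y = f t).
  destruct (completeness E) as [l [Hub Hlub]].
  - exists B. intros y [t [Ht ->]]. apply HB; auto.
  - exists (f 0), 0. split; auto; lra.
  - exists l. split; [|split].
    + intros eps Heps.
      destruct (classic (exists t, 0 <= t /\ l - eps < f t)) as [[t0 [Ht0 Hf]]|Hn].
      * exists t0. intros t Ht. assert (f t0 <= f t) by (apply Hm; lra).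
        assert (f t <= l) by (apply Hub; exists t; split; auto; lra).
        apply Rabs_def1; lra.
      * exfalso. assert (l <= l - eps); [|lra].
        apply Hlub. intros y [t [Ht ->]]. apply Rnot_lt_le. intro. apply Hn. eauto.
    + intros t Ht. apply Hub. exists t; auto.
    + intros M HM. apply Hlub. intros y [t [Ht ->]]. auto.
Qed.

Lemma lower_linear_of_deriv_ge (f f' : R -> R) d :
  (forall t, 0 <= t -> derivable_pt_lim f t (f' t)) -> (forall t, 0 <= t -> d <= f' t) ->
  forall t, 0 <= t -> f 0 + d * t <= f t.
Proof.
  intros Hd Hge t Ht.
  enough (f 0 - d * 0 <= f t - d * t) by lra.
  apply (le_of_deriv_nonneg (fun s => f s - d * s) (fun s => f' s - d)); auto.
  - intros s Hs. eapply dpl_eq.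
    + apply dpl_minus; [apply Hd; lra|].
      apply (dpl_mult (fun _ => d) (fun s => s)); [apply dpl_const | apply derivable_pt_lim_id].
    + ring.
  - intros s Hs. specialize (Hge s ltac:(lra)). lra.
Qed.

Section LimitAlgebra.

Variables f g : R -> R.
Variables a b : R.
Hypothesis f_lim : is_lim f p_infty a.
Hypothesis g_lim : is_lim g p_infty b.

Lemma is_lim_infty_mult : is_lim (fun t => f t * g t) p_infty (a * b).
Proof. exact (is_lim_mult f g p_infty a b f_lim g_lim I). Qed.

Lemma is_lim_infty_plus : is_lim (fun t => f t + g t) p_infty (a + b).
Proof. exact (is_lim_plus f g p_infty a b (a + b) f_lim g_lim eq_refl). Qed.

Lemma is_lim_infty_minus : is_lim (fun t => f t - g t) p_infty (a - b).
Proof. exact (is_lim_minus f g p_infty a b (a - b) f_lim g_lim eq_refl). Qed.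

Lemma is_lim_infty_scal k : is_lim (fun t => k * f t) p_infty (k * a).
Proof. exact (is_lim_mult (fun _ => k) f p_infty k a (is_lim_const k p_infty) f_lim I). Qed.

Lemma is_lim_infty_pow n : is_lim (fun t => f t ^ n) p_infty (a ^ n).
Proof.
  induction n as [|n IH]; simpl.
  - apply is_lim_const.
  - exact (is_lim_mult f _ p_infty a _ f_lim IH I).
Qed.

Lemma is_lim_infty_inv : a <> 0 -> is_lim (fun t => / f t) p_infty (/ a).
Proof. intros Ha. apply (is_lim_inv f p_infty a f_lim). intro E; apply Ha; now injection E. Qed.

Lemma is_lim_infty_comp phi : continuity_pt phi a -> is_lim (fun t => phi (f t)) p_infty (phi a).
Proof.
  intros Hc. eapply filterlim_comp; [exact f_lim|]. now apply continuity_pt_filterlim.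
Qed.

Lemma is_lim_infty_unique : is_lim f p_infty b -> a = b.
Proof.
  intros Hb. apply is_lim_unique in f_lim. apply is_lim_unique in Hb.
  rewrite f_lim in Hb. now injection Hb.
Qed.

End LimitAlgebra.

Lemma is_lim_infty_ext (f g : R -> R) (l : R) :
  (forall t, 0 <= t -> f t = g t) -> is_lim f p_infty l -> is_lim g p_infty l.
Proof. intros He. apply is_lim_ext_loc. exists 0. intros; apply He; lra. Qed.

Lemma beta_pos h0 h1 h2 h3 :
  0 < h0 -> 0 < h1 -> 0 < h2 -> 0 < h3 -> 0 < beta h0 h1 h2 h3.
Proof.
  intros. unfold beta. assert (0 < h0 * h1 * h2 * h3) by (repeat apply Rmult_lt_0_compat; auto).
  apply Rdiv_lt_0_compat; [lra|]. apply Rmult_lt_0_compat; [lra|]. now apply pow_lt.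
Qed.

Lemma eta_form_pos x y : 0 < x -> 0 < 2 * y ^ 2 - x * y + 2 * x ^ 2.
Proof. intros Hx. pose proof (pow2_ge_0 (y - x / 4)). pose proof (pow_lt x 2 Hx). nra. Qed.

Lemma eta_of_pos x y : 0 < x -> 0 < y -> 0 < eta_of x y.
Proof.
  intros Hx Hy. pose proof (eta_form_pos x y Hx). unfold eta_of.
  apply Rdiv_lt_0_compat; [apply pow_lt; nra | apply Rmult_lt_0_compat; apply pow_lt; lra].
Qed.

Lemma ln_eta_of x y : 0 < x -> 0 < y ->
  ln (eta_of x y) =
  25 * ln x + 25 * ln y - 4 * ln (y + x) - 3 * ln (2 * y ^ 2 - x * y + 2 * x ^ 2).
Proof.
  intros Hx Hy. pose proof (eta_form_pos x y Hx). unfold eta_of, Rdiv.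
  rewrite ln_mult, ln_Rinv, ln_mult, !ln_pow, ln_mult by
    (repeat first [apply Rinv_0_lt_compat | apply Rmult_lt_0_compat | apply pow_lt]; lra).
  simpl; ring.
Qed.

Definition cubic_m x y := 5 * x ^ 3 + 2 * x ^ 2 * y + 2 * x * y ^ 2 + 3 * y ^ 3.

Lemma pp_opp_l x y : pp (- x) y = (x - y) ^ 2 * (x ^ 2 + x * y + y ^ 2).
Proof. unfold pp; ring. Qed.

Lemma qq_opp_l x y : qq (- x) y = (x - y) * cubic_m x y.
Proof. unfold qq, cubic_m; ring. Qed.

Lemma qq_opp_r x y : qq y (- x) = (y - x) * cubic_m y x.
Proof. unfold qq, cubic_m; ring. Qed.

Lemma cubic_m_ge x y : 0 < x -> 0 < y -> 5 * x ^ 3 <= cubic_m x y.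
Proof.
  intros Hx Hy. unfold cubic_m.
  assert (0 < x ^ 2 * y) by (apply Rmult_lt_0_compat; [apply pow_lt|]; auto).
  assert (0 < x * y ^ 2) by (apply Rmult_lt_0_compat; [|apply pow_lt]; auto).
  assert (0 < y ^ 3) by (apply pow_lt; auto). lra.
Qed.

Lemma cubic_m_pos x y : 0 < x -> 0 < y -> 0 < cubic_m x y.
Proof. intros Hx Hy. pose proof (cubic_m_ge x y Hx Hy). pose proof (pow_lt x 3 Hx). lra. Qed.

Section Solution.

Variables h0 h1 h2 h3 : R.
Hypotheses (h0_pos : 0 < h0) (h1_pos : 0 < h1) (h2_pos : 0 < h2) (h3_pos : 0 < h3).
Variables g0 g1 g2 g3 : R -> R.
Hypothesis g_sol : is_solution h0 h1 h2 h3 g0 g1 g2 g3.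

Local Notation b := (beta h0 h1 h2 h3).

Lemma sol_init : g0 0 = h0 /\ g1 0 = h1 /\ g2 0 = h2 /\ g3 0 = h3.
Proof. now destruct g_sol as (I0 & I1 & I2 & I3 & _). Qed.

Lemma sol_deriv t : 0 <= t ->
  derivable_pt_lim g0 t (- b * pp (- g1 t) (g2 t) * g0 t ^ 3) /\
  derivable_pt_lim g1 t (- b * qq (- g1 t) (g2 t) * g0 t ^ 2 * g1 t) /\
  derivable_pt_lim g2 t (- b * qq (g2 t) (- g1 t) * g0 t ^ 2 * g2 t) /\
  derivable_pt_lim g3 t (3 * b * pp (- g1 t) (g2 t) * g0 t ^ 2 * g3 t).
Proof. destruct g_sol as (_ & _ & _ & _ & D). apply D. Qed.

Lemma sol_pos t : 0 <= t -> 0 < g0 t /\ 0 < g1 t /\ 0 < g2 t /\ 0 < g3 t.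
Proof.
  intros Ht. destruct sol_init as (I0 & I1 & I2 & I3). repeat split.
  - apply (linear_ode_pos g0 (fun s => - b * pp (- g1 s) (g2 s) * g0 s ^ 2)); auto; [| | lra];
      intros s Hs; destruct (sol_deriv s Hs) as (D0 & D1 & D2 & _).
    + eapply dpl_eq; [exact D0 | ring].
    + unfold pp. eapply dpl_continuity_pt. derive_rules.
  - apply (linear_ode_pos g1 (fun s => - b * qq (- g1 s) (g2 s) * g0 s ^ 2)); auto; [| | lra];
      intros s Hs; destruct (sol_deriv s Hs) as (D0 & D1 & D2 & _).
    + exact D1.
    + unfold qq. eapply dpl_continuity_pt. derive_rules.
  - apply (linear_ode_pos g2 (fun s => - b * qq (g2 s) (- g1 s) * g0 s ^ 2)); auto; [| | lra];
      intros s Hs; destruct (sol_deriv s Hs) as (D0 & D1 & D2 & _).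
    + exact D2.
    + unfold qq. eapply dpl_continuity_pt. derive_rules.
  - apply (linear_ode_pos g3 (fun s => 3 * b * pp (- g1 s) (g2 s) * g0 s ^ 2)); auto; [| | lra];
      intros s Hs; destruct (sol_deriv s Hs) as (D0 & D1 & D2 & D3).
    + exact D3.
    + unfold pp. eapply dpl_continuity_pt. derive_rules.
Qed.

Lemma sol_ratio_invariant t : 0 <= t -> g0 t ^ 2 / (g1 t * g2 t) = h0 ^ 2 / (h1 * h2).
Proof.
  intros Ht. destruct sol_init as (I0 & I1 & I2 & _).
  assert (Hln : forall x y z, 0 < x -> 0 < y -> 0 < z ->
            ln (x ^ 2 / (y * z)) = 2 * ln x - ln y - ln z).
  { intros x y z Hx Hy Hz. unfold Rdiv.
    rewrite ln_mult, ln_Rinv, ln_mult, ln_pow by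
      (repeat first [apply Rinv_0_lt_compat | apply Rmult_lt_0_compat | apply pow_lt]; lra).
    simpl; ring. }
  destruct (sol_pos t Ht) as (P0 & P1 & P2 & _).
  apply ln_inv; [apply Rdiv_lt_0_compat; [apply pow_lt | apply Rmult_lt_0_compat]; auto ..|].
  rewrite !Hln, <- I0, <- I1, <- I2 by lra.
  apply (const_of_deriv_zero (fun s => 2 * ln (g0 s) - ln (g1 s) - ln (g2 s))); auto.
  intros s Hs. destruct (sol_pos s Hs) as (Q0 & Q1 & Q2 & _).
  destruct (sol_deriv s Hs) as (D0 & D1 & D2 & _).
  eapply dpl_eq; [derive_rules|]. unfold pp, qq. field. lra.
Qed.

Lemma sol_cube_invariant t : 0 <= t -> g0 t ^ 3 * g3 t = h0 ^ 3 * h3.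
Proof.
  intros Ht. destruct sol_init as (I0 & _ & _ & I3).
  assert (Hln : forall x y, 0 < x -> 0 < y -> ln (x ^ 3 * y) = 3 * ln x + ln y).
  { intros x y Hx Hy. rewrite ln_mult, ln_pow by (try apply pow_lt; lra). simpl; ring. }
  destruct (sol_pos t Ht) as (P0 & _ & _ & P3).
  apply ln_inv; [apply Rmult_lt_0_compat; [apply pow_lt|]; auto ..|].
  rewrite !Hln, <- I0, <- I3 by lra.
  apply (const_of_deriv_zero (fun s => 3 * ln (g0 s) + ln (g3 s))); auto.
  intros s Hs. destruct (sol_pos s Hs) as (Q0 & Q1 & Q2 & Q3).
  destruct (sol_deriv s Hs) as (D0 & D1 & D2 & D3).
  eapply dpl_eq; [derive_rules|]. unfold pp. field. lra.
Qed.

Lemma sol_eta_invariant t : 0 <= t -> eta_of (g1 t) (g2 t) = eta_of h1 h2.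
Proof.
  intros Ht. destruct sol_init as (_ & I1 & I2 & _).
  destruct (sol_pos t Ht) as (_ & P1 & P2 & _).
  apply ln_inv; [apply eta_of_pos; auto ..|].
  rewrite !ln_eta_of, <- I1, <- I2 by lra.
  apply (const_of_deriv_zero (fun s => 25 * ln (g1 s) + 25 * ln (g2 s) - 4 * ln (g2 s + g1 s)
     - 3 * ln (2 * g2 s ^ 2 - g1 s * g2 s + 2 * g1 s ^ 2))); auto.
  intros s Hs. destruct (sol_pos s Hs) as (Q0 & Q1 & Q2 & _).
  destruct (sol_deriv s Hs) as (D0 & D1 & D2 & _).
  pose proof (eta_form_pos (g1 s) (g2 s) Q1).
  eapply dpl_eq; [derive_rules; lra|]. unfold pp, qq. simpl. field. lra.
Qed.

Lemma sol_eta_identity t : 0 <= t ->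
  (g1 t * g2 t) ^ 25 =
  eta_of h1 h2 * (g2 t + g1 t) ^ 4 * (2 * g2 t ^ 2 - g1 t * g2 t + 2 * g1 t ^ 2) ^ 3.
Proof.
  intros Ht. destruct (sol_pos t Ht) as (_ & Q1 & Q2 & _).
  pose proof (eta_form_pos (g1 t) (g2 t) Q1).
  rewrite <- (sol_eta_invariant t Ht). unfold eta_of. field. split; lra.
Qed.

Lemma sol_gap_deriv t : 0 <= t ->
  derivable_pt_lim (fun s => g2 s - g1 s) t
    (- b * g0 t ^ 2 * (g1 t * cubic_m (g1 t) (g2 t) + g2 t * cubic_m (g2 t) (g1 t))
     * (g2 t - g1 t)).
Proof.
  intros Ht. destruct (sol_deriv t Ht) as (_ & D1 & D2 & _).
  eapply dpl_eq; [apply dpl_minus; eassumption|]. rewrite qq_opp_l, qq_opp_r. ring.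
Qed.

Lemma sol_gap_rate_continuous t : 0 <= t ->
  continuity_pt (fun s => - b * g0 s ^ 2 *
    (g1 s * cubic_m (g1 s) (g2 s) + g2 s * cubic_m (g2 s) (g1 s))) t.
Proof.
  intros Ht. destruct (sol_deriv t Ht) as (D0 & D1 & D2 & _).
  unfold cubic_m. eapply dpl_continuity_pt. derive_rules.
Qed.

Lemma sol_g3_nondecreasing s t : 0 <= s -> s <= t -> g3 s <= g3 t.
Proof.
  intros Hs Hst. pose proof (beta_pos _ _ _ _ h0_pos h1_pos h2_pos h3_pos).
  apply (le_of_deriv_nonneg g3 (fun u => 3 * b * pp (- g1 u) (g2 u) * g0 u ^ 2 * g3 u)); auto.
  - intros u Hu. apply sol_deriv; lra.
  - intros u Hu. destruct (sol_pos u ltac:(lra)) as (Q0 & Q1 & Q2 & Q3).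
    rewrite pp_opp_l.
    assert (0 < g1 u ^ 2 + g1 u * g2 u + g2 u ^ 2)
      by (pose proof (Rmult_lt_0_compat _ _ Q1 Q2);
          pose proof (pow_lt _ 2 Q1); pose proof (pow_lt _ 2 Q2); lra).
    pose proof (pow2_ge_0 (g1 u - g2 u)). pose proof (pow_lt _ 2 Q0).
    apply Rmult_le_pos; [apply Rmult_le_pos; [apply Rmult_le_pos|]|]; try lra.
    apply Rmult_le_pos; lra.
Qed.

Lemma sol_const_of_eq : h1 = h2 ->
  forall t, 0 <= t -> g0 t = h0 /\ g1 t = h1 /\ g2 t = h2 /\ g3 t = h3.
Proof.
  intros E t Ht. destruct sol_init as (I0 & I1 & I2 & I3).
  assert (Eq : forall s, 0 <= s -> g2 s = g1 s).
  { intros s Hs. enough (g2 s - g1 s = 0) by lra.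
    apply (linear_ode_zero _ _ sol_gap_deriv sol_gap_rate_continuous); auto; lra. }
  rewrite <- I0, <- I1, <- I2, <- I3.
  repeat split; apply const_of_deriv_zero; auto; intros s Hs;
    destruct (sol_deriv s Hs) as (D0 & D1 & D2 & D3); eapply dpl_eq; try eassumption;
    rewrite Eq, ?pp_opp_l, ?qq_opp_l, ?qq_opp_r by exact Hs; ring.
Qed.

Section Ordered.

Hypothesis h12 : h1 < h2.

Lemma sol_gap_pos t : 0 <= t -> g1 t < g2 t.
Proof.
  intros Ht. destruct sol_init as (_ & I1 & I2 & _).
  enough (0 < g2 t - g1 t) by lra.
  apply (linear_ode_pos _ _ sol_gap_deriv sol_gap_rate_continuous); auto; lra.
Qed.

Lemma sol_g1_increasing s t : 0 <= s -> s < t -> g1 s < g1 t.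
Proof.
  intros Hs Hst. pose proof (beta_pos _ _ _ _ h0_pos h1_pos h2_pos h3_pos).
  apply (lt_of_deriv_pos g1 (fun u => - b * qq (- g1 u) (g2 u) * g0 u ^ 2 * g1 u)); auto.
  - intros u Hu. apply sol_deriv; lra.
  - intros u Hu. destruct (sol_pos u ltac:(lra)) as (Q0 & Q1 & Q2 & _).
    pose proof (sol_gap_pos u ltac:(lra)). pose proof (cubic_m_pos _ _ Q1 Q2).
    pose proof (pow_lt _ 2 Q0). rewrite qq_opp_l.
    replace (- b * ((g1 u - g2 u) * cubic_m (g1 u) (g2 u)) * g0 u ^ 2 * g1 u)
      with (b * (g2 u - g1 u) * cubic_m (g1 u) (g2 u) * g0 u ^ 2 * g1 u) by ring.
    apply Rmult_lt_0_compat; [apply Rmult_lt_0_compat; [apply Rmult_lt_0_compat;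
      [apply Rmult_lt_0_compat|]|]|]; lra.
Qed.

Lemma sol_g2_decreasing s t : 0 <= s -> s < t -> g2 t < g2 s.
Proof.
  intros Hs Hst. pose proof (beta_pos _ _ _ _ h0_pos h1_pos h2_pos h3_pos).
  enough (- g2 s < - g2 t) by lra.
  apply (lt_of_deriv_pos (fun u => - g2 u)
           (fun u => - (- b * qq (g2 u) (- g1 u) * g0 u ^ 2 * g2 u))); auto.
  - intros u Hu. apply dpl_opp, sol_deriv; lra.
  - intros u Hu. destruct (sol_pos u ltac:(lra)) as (Q0 & Q1 & Q2 & _).
    pose proof (sol_gap_pos u ltac:(lra)). pose proof (cubic_m_pos _ _ Q2 Q1).
    pose proof (pow_lt _ 2 Q0). rewrite qq_opp_r.
    replace (- (- b * ((g2 u - g1 u) * cubic_m (g2 u) (g1 u)) * g0 u ^ 2 * g2 u))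
      with (b * (g2 u - g1 u) * cubic_m (g2 u) (g1 u) * g0 u ^ 2 * g2 u) by ring.
    apply Rmult_lt_0_compat; [apply Rmult_lt_0_compat; [apply Rmult_lt_0_compat;
      [apply Rmult_lt_0_compat|]|]|]; lra.
Qed.

Lemma sol_g1_g2_bounds t : 0 <= t -> h1 <= g1 t /\ g1 t < g2 t /\ g2 t <= h2.
Proof.
  intros Ht. destruct sol_init as (_ & I1 & I2 & _).
  destruct (Req_dec t 0) as [->|Ht0].
  - rewrite I1, I2. lra.
  - rewrite <- I1, <- I2.
    pose proof (sol_g1_increasing 0 t ltac:(lra) ltac:(lra)).
    pose proof (sol_g2_decreasing 0 t ltac:(lra) ltac:(lra)).
    pose proof (sol_gap_pos t Ht). lra.
Qed.

(* By [g0^2 = c g1 g2] and [h1 <= g1 <= g2], the speed of [g1] dominates a fixed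
   multiple of the gap [g2 - g1]. *)
Lemma sol_g1_speed_ge_gap : exists k, 0 < k /\ forall t, 0 <= t ->
  k * (g2 t - g1 t) <= - b * qq (- g1 t) (g2 t) * g0 t ^ 2 * g1 t.
Proof.
  pose proof (beta_pos _ _ _ _ h0_pos h1_pos h2_pos h3_pos) as Hb.
  set (B := b) in *. clearbody B.
  set (c := h0 ^ 2 / (h1 * h2)).
  assert (Hc : 0 < c) by (apply Rdiv_lt_0_compat; [apply pow_lt | apply Rmult_lt_0_compat]; lra).
  pose proof (pow_lt _ 3 h1_pos).
  exists (B * (5 * h1 ^ 3) * (c * (h1 * h1)) * h1). split.
  { apply Rmult_lt_0_compat; [apply Rmult_lt_0_compat; [apply Rmult_lt_0_compat|]|]; nra. }
  intros t Ht.
  destruct (sol_pos t Ht) as (Q0 & Q1 & Q2 & _).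
  destruct (sol_g1_g2_bounds t Ht) as (B1 & B12 & B2).
  assert (E0 : g0 t ^ 2 = c * (g1 t * g2 t)).
  { unfold c. rewrite <- (sol_ratio_invariant t Ht). field. lra. }
  rewrite qq_opp_l, E0.
  replace (- B * ((g1 t - g2 t) * cubic_m (g1 t) (g2 t)) * (c * (g1 t * g2 t)) * g1 t)
    with (B * cubic_m (g1 t) (g2 t) * (c * (g1 t * g2 t)) * g1 t * (g2 t - g1 t)) by ring.
  assert (HM : 5 * h1 ^ 3 <= cubic_m (g1 t) (g2 t)).
  { apply Rle_trans with (5 * g1 t ^ 3); [|apply cubic_m_ge; lra].
    apply Rmult_le_compat_l; [lra|]. apply pow_incr; lra. }
  assert (Hprod : c * (h1 * h1) <= c * (g1 t * g2 t))
    by (apply Rmult_le_compat_l; [lra | apply Rmult_le_compat; lra]).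
  apply Rmult_le_compat_r; [lra|].
  apply Rmult_le_compat; [| lra | | lra].
  - apply Rmult_le_pos; [apply Rmult_le_pos|]; nra.
  - apply Rmult_le_compat; [apply Rmult_le_pos; lra | nra | | exact Hprod].
    apply Rmult_le_compat_l; lra.
Qed.

Lemma sol_common_limit_of_lt : exists L, 0 < L /\ tends_at_infty g1 L /\ tends_at_infty g2 L.
Proof.
  destruct sol_init as (_ & I1 & _ & _).
  assert (Le1 : forall s t, 0 <= s -> s <= t -> g1 s <= g1 t).
  { intros s t Hs Hst. destruct (Req_dec s t) as [->|]; [lra|].
    pose proof (sol_g1_increasing s t); lra. }
  assert (Le2 : forall s t, 0 <= s -> s <= t -> - g2 s <= - g2 t).
  { intros s t Hs Hst. destruct (Req_dec s t) as [->|]; [lra|].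
    pose proof (sol_g2_decreasing s t); lra. }
  assert (Cross : forall s t, 0 <= s -> 0 <= t -> g1 s <= g2 t).
  { intros s t Hs Ht. pose proof (Le1 s (Rmax s t) Hs (Rmax_l s t)).
    pose proof (Le2 t (Rmax s t) Ht (Rmax_r s t)).
    pose proof (sol_gap_pos (Rmax s t) (Rle_trans _ _ _ Hs (Rmax_l s t))). lra. }
  destruct (nondecreasing_bounded_tends g1 h2 Le1) as [l1 [T1 [U1 Lub1]]].
  { intros t Ht. pose proof (sol_g1_g2_bounds t Ht); lra. }
  destruct (nondecreasing_bounded_tends (fun t => - g2 t) (- h1) Le2) as [l2 [T2 [U2 Lub2]]].
  { intros t Ht. pose proof (sol_g1_g2_bounds t Ht); lra. }
  assert (Hl : l1 <= - l2).
  { enough (l2 <= - l1) by lra. apply Lub2. intros t Ht.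
    enough (l1 <= g2 t) by lra. apply Lub1. intros s Hs. now apply Cross. }
  assert (Heq : l1 = - l2).
  { destruct (Rle_lt_or_eq_dec _ _ Hl) as [Hlt|]; [exfalso|assumption].
    destruct sol_g1_speed_ge_gap as [k [Hk Hspeed]].
    assert (Hd : 0 < k * (- l2 - l1)) by (apply Rmult_lt_0_compat; lra).
    assert (Hge : forall t, 0 <= t ->
              k * (- l2 - l1) <= - b * qq (- g1 t) (g2 t) * g0 t ^ 2 * g1 t).
    { intros t Ht. specialize (Hspeed t Ht). specialize (U1 t Ht). specialize (U2 t Ht).
      assert (k * (- l2 - l1) <= k * (g2 t - g1 t)) by (apply Rmult_le_compat_l; lra). lra. }
    set (T := (h2 - h1) / (k * (- l2 - l1))).
    assert (HT : 0 <= T) by (apply Rlt_le, Rdiv_lt_0_compat; lra).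
    pose proof (lower_linear_of_deriv_ge g1 _ _ (fun t Ht => proj1 (proj2 (sol_deriv t Ht)))
                  Hge T HT) as Hgrow.
    pose proof (sol_g1_g2_bounds T HT).
    replace (k * (- l2 - l1) * T) with (h2 - h1) in Hgrow by (unfold T; field; lra). lra. }
  exists l1. split; [|split; [exact T1|]].
  - pose proof (U1 0 (Rle_refl 0)). lra.
  - rewrite tends_at_infty_is_lim in *. rewrite Heq.
    replace (- l2) with (-1 * l2) by ring.
    apply (is_lim_ext (fun t => -1 * - g2 t)); [intros; ring|].
    now apply is_lim_infty_scal.
Qed.

End Ordered.

Section AtLimit.

Variable L : R.
Hypothesis L_pos : 0 < L.
Hypothesis g1_lim : tends_at_infty g1 L.
Hypothesis g2_lim : tends_at_infty g2 L.

(* At [g1 = g2 = L] the quotient [eta_of] equals [L^40 / 432]. *)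
Lemma sol_limit_pow40 : L ^ 40 = 432 * eta_of h1 h2.
Proof.
  apply tends_at_infty_is_lim in g1_lim, g2_lim.
  set (F := fun x y => (x * y) ^ 25 - eta_of h1 h2 *
              ((y + x) ^ 4 * (2 * y ^ 2 - x * y + 2 * x ^ 2) ^ 3)).
  assert (Hlim : is_lim (fun t => F (g1 t) (g2 t)) p_infty (F L L)).
  { unfold F. apply is_lim_infty_minus.
    - apply is_lim_infty_pow, is_lim_infty_mult; assumption.
    - apply is_lim_infty_scal, is_lim_infty_mult; apply is_lim_infty_pow;
        [apply is_lim_infty_plus; assumption|].
      apply is_lim_infty_plus; [apply is_lim_infty_minus|].
      + apply is_lim_infty_scal, is_lim_infty_pow; assumption.
      + apply is_lim_infty_mult; assumption.
      + apply is_lim_infty_scal, is_lim_infty_pow; assumption. }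
  assert (Hzero : is_lim (fun t => F (g1 t) (g2 t)) p_infty 0).
  { apply (is_lim_infty_ext (fun _ => 0)); [|apply is_lim_const].
    intros t Ht. unfold F. rewrite (sol_eta_identity t Ht). ring. }
  pose proof (is_lim_infty_unique _ _ _ Hlim Hzero) as HF0.
  assert (Hfact : L ^ 10 * (L ^ 40 - 432 * eta_of h1 h2) = 0) by (rewrite <- HF0; unfold F; ring).
  destruct (Rmult_integral _ _ Hfact) as [H10|]; [|lra].
  exfalso. now apply (pow_nonzero L 10); [lra|].
Qed.

Lemma sol_g0_limit : tends_at_infty g0 (sqrt (h0 ^ 3 * h3 / (h0 * h1 * h2 * h3)) * L).
Proof.
  set (c := h0 ^ 3 * h3 / (h0 * h1 * h2 * h3)).
  assert (Hc : 0 < c) by (apply Rdiv_lt_0_compat;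
    [apply Rmult_lt_0_compat; [apply pow_lt|] | repeat apply Rmult_lt_0_compat]; lra).
  assert (Ec : c = h0 ^ 2 / (h1 * h2)) by (unfold c; field; repeat split; lra).
  apply tends_at_infty_is_lim.
  replace (sqrt c * L) with (sqrt (c * (L * L))) by (rewrite sqrt_mult, sqrt_square; nra).
  apply (is_lim_infty_ext (fun t => sqrt (c * (g1 t * g2 t)))).
  - intros t Ht. destruct (sol_pos t Ht) as (Q0 & Q1 & Q2 & _).
    replace (c * (g1 t * g2 t)) with (g0 t ^ 2)
      by (rewrite Ec, <- (sol_ratio_invariant t Ht); field; lra).
    apply sqrt_pow2; lra.
  - apply (is_lim_infty_comp (fun t => c * (g1 t * g2 t))).
    + apply is_lim_infty_scal, is_lim_infty_mult; now apply tends_at_infty_is_lim.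
    + apply (dpl_continuity_pt _ _ _ (derivable_pt_lim_sqrt _
        (Rmult_lt_0_compat _ _ Hc (Rmult_lt_0_compat _ _ L_pos L_pos)))).
Qed.

Lemma sol_g3_limit :
  tends_at_infty g3 (sqrt ((h0 * h1 * h2 * h3) ^ 3 / (h0 ^ 3 * h3)) * / L ^ 3).
Proof.
  set (c := h0 ^ 3 * h3 / (h0 * h1 * h2 * h3)).
  assert (Hc : 0 < c) by (apply Rdiv_lt_0_compat;
    [apply Rmult_lt_0_compat; [apply pow_lt|] | repeat apply Rmult_lt_0_compat]; lra).
  assert (Hs : 0 < sqrt c) by (apply sqrt_lt_R0; lra).
  assert (Hsqrt : sqrt ((h0 * h1 * h2 * h3) ^ 3 / (h0 ^ 3 * h3)) = h0 ^ 3 * h3 / sqrt c ^ 3).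
  { rewrite <- (sqrt_pow2 (h0 ^ 3 * h3 / sqrt c ^ 3)).
    - f_equal. replace ((h0 ^ 3 * h3 / sqrt c ^ 3) ^ 2) with ((h0 ^ 3 * h3) ^ 2 / (sqrt c ^ 2) ^ 3)
        by (field; lra).
      rewrite pow2_sqrt by lra. unfold c. field. repeat split; lra.
    - apply Rlt_le, Rdiv_lt_0_compat;
        [apply Rmult_lt_0_compat; [apply pow_lt|] | apply pow_lt]; lra. }
  rewrite Hsqrt. apply tends_at_infty_is_lim.
  replace (h0 ^ 3 * h3 / sqrt c ^ 3 * / L ^ 3) with (h0 ^ 3 * h3 * / (sqrt c * L) ^ 3)
    by (field; lra).
  apply (is_lim_infty_ext (fun t => h0 ^ 3 * h3 * / g0 t ^ 3)).
  - intros t Ht. destruct (sol_pos t Ht) as (Q0 & _).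
    rewrite <- (sol_cube_invariant t Ht). field. lra.
  - apply is_lim_infty_scal, is_lim_infty_inv; [|apply pow_nonzero; nra].
    apply is_lim_infty_pow, tends_at_infty_is_lim, sol_g0_limit.
Qed.

End AtLimit.

End Solution.

Lemma beta_swap h0 h1 h2 h3 : beta h0 h2 h1 h3 = beta h0 h1 h2 h3.
Proof. unfold beta. do 3 f_equal. ring. Qed.

Lemma is_solution_swap h0 h1 h2 h3 g0 g1 g2 g3 :
  is_solution h0 h1 h2 h3 g0 g1 g2 g3 -> is_solution h0 h2 h1 h3 g0 g2 g1 g3.
Proof.
  intros (I0 & I1 & I2 & I3 & D). repeat split; auto; rewrite beta_swap;
    destruct (D t H) as (D0 & D1 & D2 & D3); eapply dpl_eq; try eassumption;
    unfold pp, qq; ring.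
Qed.

Section CommonLimit.

Variables h0 h1 h2 h3 : R.
Hypotheses (h0_pos : 0 < h0) (h1_pos : 0 < h1) (h2_pos : 0 < h2) (h3_pos : 0 < h3).
Variables g0 g1 g2 g3 : R -> R.
Hypothesis g_sol : is_solution h0 h1 h2 h3 g0 g1 g2 g3.

Lemma sol_common_limit : exists L, 0 < L /\ tends_at_infty g1 L /\ tends_at_infty g2 L.
Proof.
  destruct (Rtotal_order h1 h2) as [Hlt|[Heq|Hgt]].
  - now apply (sol_common_limit_of_lt h0 h1 h2 h3 h0_pos h1_pos h2_pos h3_pos g0 g1 g2 g3).
  - exists h1. split; [exact h1_pos|].
    pose proof (sol_const_of_eq _ _ _ _ _ _ _ _ g_sol Heq) as E.
    split; intros eps Heps; exists 0; intros t Ht; destruct (E t Ht) as (_ & E1 & E2 & _);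
      rewrite ?E1, ?E2, ?Heq, Rminus_diag, Rabs_R0; exact Heps.
  - destruct (sol_common_limit_of_lt h0 h2 h1 h3 h0_pos h2_pos h1_pos h3_pos g0 g2 g1 g3
                (is_solution_swap _ _ _ _ _ _ _ _ g_sol) Hgt) as (L & HL & T2 & T1).
    now exists L.
Qed.

End CommonLimit.

Section AutonomousODE.

Variable V : R -> R.
Variables r0 C : R.
Hypothesis r0_gt1 : 1 < r0.
Hypothesis V_cont : forall r, 1 < r -> continuity_pt V r.
Hypothesis V_neg : forall r, 1 < r -> V r < 0.
Hypothesis V_linear : forall r, 1 < r <= r0 -> - V r <= C * (r - 1).

(* The solution is [r t = clock^-1 (- t)]: [- clock r] is the time taken to flow
   from [r0] down to [r]. *)
Definition clock r := RInt (fun s => - / V s) r0 r.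

Lemma clock_deriv r : 1 < r -> derivable_pt_lim clock r (- / V r).
Proof.
  intros Hr.
  assert (Hc : forall s, 1 < s -> continuous (fun s => - / V s) s).
  { intros s Hs. apply continuity_pt_filterlim, continuity_pt_opp, continuity_pt_inv;
      [apply V_cont | pose proof (V_neg s)]; lra. }
  apply is_derive_Reals, (is_derive_RInt (fun s => - / V s) clock r0 r); [|now apply Hc].
  assert (Hd : 0 < (r - 1) / 2) by lra.
  exists (mkposreal _ Hd). intros y Hy.
  apply (@RInt_correct R_CompleteNormedModule), (@ex_RInt_continuous R_CompleteNormedModule).
  intros z Hz. apply Hc.
  change (Rabs (y - r) < (r - 1) / 2) in Hy. apply Rabs_def2 in Hy.
  assert (1 < Rmin r0 y) by (apply Rmin_glb_lt; lra). lra.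
Qed.

Lemma clock_r0 : clock r0 = 0.
Proof. exact (@RInt_point R_CompleteNormedModule r0 _). Qed.

Lemma clock_lt s t : 1 < s -> s < t -> clock s < clock t.
Proof.
  intros Hs Hst. apply (lt_of_deriv_pos _ (fun r => - / V r)); auto.
  - intros r Hr. apply clock_deriv; lra.
  - intros r Hr. pose proof (V_neg r ltac:(lra)). rewrite <- Rinv_opp.
    apply Rinv_0_lt_compat; lra.
Qed.

Lemma clock_continuity_pt r : 1 < r -> continuity_pt clock r.
Proof. intros Hr. exact (dpl_continuity_pt _ _ _ (clock_deriv r Hr)). Qed.

(* Near [1] the integrand dominates [1 / (C (s - 1))], whose integral diverges. *)
Lemma clock_unbounded_below M : exists a, 1 < a < r0 /\ clock a < M.
Proof.
  assert (HC : 0 < C).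
  { pose proof (V_neg r0 r0_gt1). pose proof (V_linear r0 ltac:(lra)). nra. }
  assert (Hbound : forall s, 1 < s <= r0 -> / C * / (s - 1) <= - / V s).
  { intros s Hs. pose proof (V_neg s ltac:(lra)). pose proof (V_linear s Hs).
    rewrite <- Rinv_mult, <- Rinv_opp. apply Rinv_le_contravar; nra. }
  set (k := C * (Rabs M + 1)).
  assert (Hk : 0 < k) by (pose proof (Rabs_pos M); unfold k; nra).
  set (a := 1 + (r0 - 1) * exp (- k)).
  assert (He : exp (- k) < 1) by (rewrite <- exp_0; apply exp_increasing; lra).
  assert (He0 : 0 < exp (- k)) by apply exp_pos.
  assert (Ha : 1 < a < r0) by (unfold a; split; nra).
  exists a. split; [exact Ha|].
  assert (Hmono : clock a - / C * ln (a - 1) <= clock r0 - / C * ln (r0 - 1)).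
  { apply (le_of_deriv_nonneg (fun s => clock s - / C * ln (s - 1))
                              (fun s => - / V s - / C * / (s - 1))); [lra | |].
    - intros s Hs. apply dpl_minus; [apply clock_deriv; lra|].
      eapply dpl_eq; [apply (dpl_mult (fun _ => / C)), dpl_ln; [apply dpl_const | lra |]|].
      + apply dpl_minus; [apply derivable_pt_lim_id | apply dpl_const].
      + cbv beta. field. split; lra.
    - intros s Hs. specialize (Hbound s ltac:(lra)). lra. }
  rewrite clock_r0 in Hmono.
  replace (a - 1) with ((r0 - 1) * exp (- k)) in Hmono by (unfold a; ring).
  rewrite ln_mult, ln_exp in Hmono by lra.
  assert (/ C * k = Rabs M + 1) by (unfold k; field; lra).
  pose proof (Rle_abs (- M)) as HM. rewrite Rabs_Ropp in HM. nra.
Qed.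

Definition clock_inv u := epsilon (inhabits 0) (fun r => 1 < r /\ clock r = u).

Lemma clock_inj s t : 1 < s -> 1 < t -> clock s = clock t -> s = t.
Proof.
  intros Hs Ht E. destruct (Rtotal_order s t) as [|[|]]; auto;
    [pose proof (clock_lt s t) | pose proof (clock_lt t s)]; lra.
Qed.

Lemma clock_inv_clock r : 1 < r -> clock_inv (clock r) = r.
Proof.
  intros Hr.
  assert (H : 1 < clock_inv (clock r) /\ clock (clock_inv (clock r)) = clock r)
    by (unfold clock_inv; apply epsilon_spec; now exists r).
  apply clock_inj; tauto.
Qed.

Lemma clock_inv_between a b u : 1 < a -> a < b -> clock a <= u <= clock b ->
  a <= clock_inv u <= b /\ clock (clock_inv u) = u.
Proof.
  intros Ha Hab Hu.
  assert (Hex : exists r, a <= r <= b /\ clock r = u).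
  { destruct (Req_dec u (clock a)) as [->|Ea]; [exists a; split; [lra|auto]|].
    destruct (Req_dec u (clock b)) as [->|Eb]; [exists b; split; [lra|auto]|].
    destruct (Ranalysis5.IVT_interv (fun r => clock r - u) a b) as [z [Hz1 Hz2]]; try lra.
    - intros c Hc. apply continuity_pt_minus; [apply clock_continuity_pt; lra|].
      apply continuity_pt_const. now intros ? ?.
    - exists z. split; [exact Hz1|lra]. }
  destruct Hex as [r [Hr <-]]. rewrite clock_inv_clock by lra. split; [lra|reflexivity].
Qed.

Lemma clock_inv_deriv u : u < clock (r0 + 1) ->
  1 < clock_inv u /\ derivable_pt_lim clock_inv u (1 / (- / V (clock_inv u))).
Proof.
  intros Hu.
  set (b := r0 + 1) in *.
  destruct (clock_unbounded_below (u - 1)) as [a [Ha Hca]].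
  assert (Hab : a < b) by (unfold b; lra).
  assert (Hin : forall v, clock a <= v <= clock b ->
            a <= clock_inv v <= b /\ clock (clock_inv v) = v)
    by (intros v Hv; apply clock_inv_between; lra).
  assert (Ga : clock_inv (clock a) = a) by (apply clock_inv_clock; lra).
  assert (Gb : clock_inv (clock b) = b) by (apply clock_inv_clock; unfold b; lra).
  destruct (Hin u ltac:(lra)) as [Hu_in _].
  split; [lra|].
  assert (Hcont : continuity_pt clock_inv u).
  { apply (Ranalysis5.continuity_pt_recip_interv clock clock_inv a b); [unfold b; lra | | | | |lra].
    - intros x y Hx Hxy Hy. apply clock_lt; lra.
    - intros x H1 H2. apply Hin; auto.
    - intros x H1 H2. apply Hin; auto.
    - intros c Hc. apply clock_continuity_pt; lra. }
  assert (Ha1 : 1 < clock_inv (clock a)) by lra.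
  set (Prf := fun r (H : clock_inv (clock a) <= r <= clock_inv (clock b)) =>
     exist (fun l => derivable_pt_lim clock r l) (- / V r)
       (clock_deriv r (Rlt_le_trans _ _ _ Ha1 (proj1 H)))).
  assert (Hincr : clock_inv (clock a) <= clock_inv u <= clock_inv (clock b)) by lra.
  apply (Ranalysis5.derivable_pt_lim_recip_interv clock clock_inv (clock a) (clock b) u
           Prf Hcont ltac:(lra) ltac:(lra) Hincr).
  - intros x Hx. apply Hin; auto.
  - simpl. pose proof (V_neg (clock_inv u) ltac:(lra)).
    apply Ropp_neq_0_compat, Rinv_neq_0_compat. lra.
Qed.

Theorem autonomous_ode_solution :
  exists r, r 0 = r0 /\ forall t, 0 <= t -> 1 < r t /\ derivable_pt_lim r t (V (r t)).
Proof.
  exists (fun t => clock_inv (- t)). split.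
  - rewrite Ropp_0, <- clock_r0. apply clock_inv_clock, r0_gt1.
  - intros t Ht.
    assert (Hpos : 0 < clock (r0 + 1)) by (rewrite <- clock_r0; apply clock_lt; lra).
    destruct (clock_inv_deriv (- t) ltac:(lra)) as [H1 H2].
    split; [exact H1|].
    eapply dpl_eq; [apply (dpl_comp clock_inv (fun s => - s));
                    [apply dpl_opp, derivable_pt_lim_id | exact H2]|].
    pose proof (V_neg _ H1). field. lra.
Qed.

End AutonomousODE.

Definition sg r := 2 * r ^ 2 - r + 2.

Definition cubic_q r := 8 + 4 * r + 4 * r ^ 2 + 8 * r ^ 3.

Lemma sg_pos r : 0 < sg r.
Proof. pose proof (eta_form_pos 1 r Rlt_0_1). unfold sg. simpl in *. lra. Qed.

Lemma cubic_q_pos r : 0 < r -> 0 < cubic_q r.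
Proof. intros Hr. pose proof (pow_lt _ 2 Hr). pose proof (pow_lt _ 3 Hr). unfold cubic_q. lra. Qed.

Lemma cubic_q_le s r : 0 < s -> s <= r -> cubic_q s <= cubic_q r.
Proof.
  intros Hs Hsr. assert (s ^ 2 <= r ^ 2) by (apply pow_incr; lra).
  assert (s ^ 3 <= r ^ 3) by (apply pow_incr; lra). unfold cubic_q. lra.
Qed.

Definition level_log' r := (4 / (1 + r) + 3 * (4 * r - 1) / sg r - 25 / r) / 40.

Section Existence.

Variables h0 h1 h2 h3 : R.
Hypotheses (h0_pos : 0 < h0) (h1_pos : 0 < h1) (h2_pos : 0 < h2) (h3_pos : 0 < h3).
Hypothesis h12 : h1 < h2.

Let r0 := h2 / h1.
Let c := h0 ^ 2 / (h1 * h2).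

(* On the level set [eta_of x (r x) = eta_of h1 h2] one has
   [x^40 = eta (1 + r)^4 sg(r)^3 / r^25]; [level_x r] is that [x]. *)
Definition level_log r :=
  (4 * (ln (1 + r) - ln (1 + r0)) + 3 * (ln (sg r) - ln (sg r0)) - 25 * (ln r - ln r0)) / 40.

Definition level_x r := h1 * exp (level_log r).

(* The equation [r' = ratio_speed r] satisfied by [r = g2 / g1], once [g0], [g1], [g2]
   are expressed through [r] by the invariants. *)
Definition ratio_speed r :=
  beta h0 h1 h2 h3 * c * level_x r ^ 6 * r ^ 2 * (1 - r) * cubic_q r.

Lemma r0_gt1 : 1 < r0.
Proof. unfold r0. apply (Rmult_lt_reg_r h1); [lra|]. field_simplify; lra. Qed.

Lemma c_pos : 0 < c.
Proof. unfold c. apply Rdiv_lt_0_compat; [apply pow_lt | apply Rmult_lt_0_compat]; lra. Qed.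

Lemma level_x_pos r : 0 < level_x r.
Proof. unfold level_x. pose proof (exp_pos (level_log r)). nra. Qed.

Lemma level_x_r0 : level_x r0 = h1.
Proof.
  unfold level_x, level_log. rewrite !Rminus_diag.
  replace ((4 * 0 + 3 * 0 - 25 * 0) / 40) with 0 by field. rewrite exp_0; ring.
Qed.

Lemma level_x_deriv r : 0 < r -> derivable_pt_lim level_x r (level_x r * level_log' r).
Proof.
  intros Hr. pose proof (sg_pos r).
  assert (Hlog : derivable_pt_lim level_log r (level_log' r)).
  { apply is_derive_Reals. unfold level_log, level_log', sg in *.
    auto_derive; [repeat split; lra | field; repeat split; lra]. }
  unfold level_x. eapply dpl_eq.
  - apply (dpl_mult (fun _ => h1)); [apply dpl_const|].
    exact (dpl_comp exp level_log r _ _ Hlog (derivable_pt_lim_exp _)).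
  - ring.
Qed.

Lemma ratio_speed_neg r : 1 < r -> ratio_speed r < 0.
Proof.
  intros Hr. pose proof (beta_pos _ _ _ _ h0_pos h1_pos h2_pos h3_pos). pose proof c_pos.
  pose proof (pow_lt _ 6 (level_x_pos r)). pose proof (pow_lt r 2 ltac:(lra)).
  pose proof (cubic_q_pos r ltac:(lra)). unfold ratio_speed.
  enough (0 < beta h0 h1 h2 h3 * c * level_x r ^ 6 * r ^ 2 * (r - 1) * cubic_q r) by nra.
  do 5 (apply Rmult_lt_0_compat; [|lra]). assumption.
Qed.

Lemma ratio_speed_continuity_pt r : 1 < r -> continuity_pt ratio_speed r.
Proof.
  intros Hr. pose proof (level_x_deriv r ltac:(lra)). unfold ratio_speed, cubic_q.
  eapply dpl_continuity_pt. derive_rules.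
Qed.

Lemma ratio_speed_linear_bound : exists C, forall r, 1 < r <= r0 -> - ratio_speed r <= C * (r - 1).
Proof.
  destruct (continuity_ab_maj level_x 1 r0) as [m [Hm _]].
  { pose proof r0_gt1; lra. }
  { intros r Hr. exact (dpl_continuity_pt _ _ _ (level_x_deriv r ltac:(lra))). }
  pose proof (beta_pos _ _ _ _ h0_pos h1_pos h2_pos h3_pos). pose proof c_pos.
  exists (beta h0 h1 h2 h3 * c * level_x m ^ 6 * r0 ^ 2 * cubic_q r0).
  intros r Hr. unfold ratio_speed.
  replace (- (beta h0 h1 h2 h3 * c * level_x r ^ 6 * r ^ 2 * (1 - r) * cubic_q r))
    with (beta h0 h1 h2 h3 * c * level_x r ^ 6 * r ^ 2 * cubic_q r * (r - 1)) by ring.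
  apply Rmult_le_compat_r; [lra|].
  pose proof (level_x_pos r). pose proof (cubic_q_pos r ltac:(lra)).
  apply Rmult_le_compat; [| lra | | apply cubic_q_le; lra].
  - pose proof (pow_lt r 2 ltac:(lra)). pose proof (pow_lt _ 6 (level_x_pos r)).
    do 3 (apply Rmult_le_pos; [|lra]). lra.
  - apply Rmult_le_compat; [| apply pow_le; lra | | apply pow_incr; lra].
    + pose proof (pow_lt _ 6 (level_x_pos r)). do 2 (apply Rmult_le_pos; [|lra]). lra.
    + apply Rmult_le_compat_l; [apply Rmult_le_pos; lra|].
      apply pow_incr. split; [lra | apply Hm; lra].
Qed.

Section Identities.

Variable r : R.
Hypothesis r_pos : 0 < r.
Let x := level_x r.
Local Notation b := (beta h0 h1 h2 h3).

Lemma ratio_identity_g1 :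
  x * level_log' r * ratio_speed r = - b * qq (- x) (r * x) * (c * r * x ^ 2) * x.
Proof.
  unfold ratio_speed. fold x. pose proof (sg_pos r).
  unfold level_log', cubic_q, qq, sg in *. field; lra.
Qed.

Lemma ratio_identity_g2 :
  ratio_speed r * x + r * (x * level_log' r * ratio_speed r)
  = - b * qq (r * x) (- x) * (c * r * x ^ 2) * (r * x).
Proof.
  unfold ratio_speed. fold x. pose proof (sg_pos r).
  unfold level_log', cubic_q, qq, sg in *. field; lra.
Qed.

Lemma ratio_identity_g0 s : 0 < s -> s * s = c * r ->
  c * ratio_speed r * / (2 * s) * x + s * (x * level_log' r * ratio_speed r)
  = - b * pp (- x) (r * x) * (s * x) ^ 3.
Proof.
  intros Hs E. unfold ratio_speed. fold x.
  assert (Ec : c = s * s / r) by (rewrite E; field; lra).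
  rewrite Ec. pose proof (sg_pos r). unfold level_log', cubic_q, pp, sg in *.
  field. repeat split; lra.
Qed.

End Identities.

Section FromRatio.

Variable r : R -> R.
Hypothesis r_init : r 0 = r0.
Hypothesis r_gt1 : forall t, 0 <= t -> 1 < r t.
Hypothesis r_deriv : forall t, 0 <= t -> derivable_pt_lim r t (ratio_speed (r t)).

Lemma ratio_x_deriv t : 0 <= t ->
  derivable_pt_lim (fun s => level_x (r s)) t
    (level_x (r t) * level_log' (r t) * ratio_speed (r t)).
Proof.
  intros Ht. pose proof (r_gt1 t Ht).
  exact (dpl_comp level_x r t _ _ (r_deriv t Ht) (level_x_deriv (r t) ltac:(lra))).
Qed.

Lemma ratio_g0_deriv t : 0 <= t ->
  derivable_pt_lim (fun s => sqrt (c * r s) * level_x (r s)) t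
    (- beta h0 h1 h2 h3 * pp (- level_x (r t)) (r t * level_x (r t))
       * (sqrt (c * r t) * level_x (r t)) ^ 3).
Proof.
  intros Ht. pose proof (r_gt1 t Ht). pose proof c_pos.
  assert (Hcr : 0 < c * r t) by nra.
  assert (Hsqrt : derivable_pt_lim (fun s => sqrt (c * r s)) t
                    (c * ratio_speed (r t) * / (2 * sqrt (c * r t)))).
  { eapply dpl_eq; [apply (dpl_comp sqrt (fun s => c * r s))|].
    - apply (dpl_mult (fun _ => c)); [apply dpl_const | exact (r_deriv t Ht)].
    - exact (derivable_pt_lim_sqrt _ Hcr).
    - ring. }
  eapply dpl_eq; [exact (dpl_mult _ _ t _ _ Hsqrt (ratio_x_deriv t Ht))|].
  apply ratio_identity_g0; [lra | apply sqrt_lt_R0; lra | apply sqrt_sqrt; lra].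
Qed.

Lemma ratio_solution :
  is_solution h0 h1 h2 h3
    (fun t => sqrt (c * r t) * level_x (r t)) (fun t => level_x (r t))
    (fun t => r t * level_x (r t))
    (fun t => h0 ^ 3 * h3 / (sqrt (c * r t) * level_x (r t)) ^ 3).
Proof.
  assert (Hg0 : sqrt (c * r0) * h1 = h0).
  { replace (c * r0) with ((h0 / h1) ^ 2) by (unfold c, r0; field; lra).
    rewrite sqrt_pow2; [field; lra | apply Rlt_le, Rdiv_lt_0_compat; lra]. }
  split; [|split; [|split; [|split]]]; rewrite ?r_init, ?level_x_r0, ?Hg0.
  - reflexivity.
  - reflexivity.
  - unfold r0; field; lra.
  - field; lra.
  - intros t Ht. pose proof (r_gt1 t Ht). pose proof c_pos.
    assert (Hx := level_x_pos (r t)).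
    assert (E2 : (sqrt (c * r t) * level_x (r t)) ^ 2 = c * r t * level_x (r t) ^ 2)
      by (rewrite Rpow_mult_distr, pow2_sqrt; nra).
    split; [|split; [|split]].
    + apply ratio_g0_deriv, Ht.
    + eapply dpl_eq; [exact (ratio_x_deriv t Ht)|].
      rewrite E2. apply ratio_identity_g1. lra.
    + eapply dpl_eq; [exact (dpl_mult _ _ t _ _ (r_deriv t Ht) (ratio_x_deriv t Ht))|].
      rewrite E2, <- ratio_identity_g2 by lra. ring.
    + set (g0 := fun s => sqrt (c * r s) * level_x (r s)).
      assert (Hg0t : 0 < g0 t) by (apply Rmult_lt_0_compat; [apply sqrt_lt_R0; nra | exact Hx]).
      eapply dpl_eq.
      * apply (derivable_pt_lim_div (fun _ => h0 ^ 3 * h3) (fun s => g0 s ^ 3));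
          [apply dpl_const | apply dpl_pow, ratio_g0_deriv, Ht | apply pow_nonzero; lra].
      * change (sqrt (c * r t) * level_x (r t)) with (g0 t). simpl. unfold Rsqr. field. lra.
Qed.

End FromRatio.

Lemma solution_exists_of_lt : exists g0 g1 g2 g3, is_solution h0 h1 h2 h3 g0 g1 g2 g3.
Proof.
  destruct ratio_speed_linear_bound as [C HC].
  destruct (autonomous_ode_solution ratio_speed r0 C r0_gt1 ratio_speed_continuity_pt
              ratio_speed_neg HC) as [r [Hr0 Hr]].
  do 4 eexists. apply (ratio_solution r Hr0); apply Hr.
Qed.

End Existence.

Lemma solution_exists h0 h1 h2 h3 : 0 < h0 -> 0 < h1 -> 0 < h2 -> 0 < h3 ->
  exists g0 g1 g2 g3, is_solution h0 h1 h2 h3 g0 g1 g2 g3.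
Proof.
  intros P0 P1 P2 P3. destruct (Rtotal_order h1 h2) as [Hlt|[<-|Hgt]].
  - now apply solution_exists_of_lt.
  - exists (fun _ => h0), (fun _ => h1), (fun _ => h1), (fun _ => h3).
    repeat split; intros; eapply dpl_eq; try apply dpl_const; unfold pp, qq; ring.
  - destruct (solution_exists_of_lt h0 h2 h1 h3 P0 P2 P1 P3 Hgt) as (g0 & g1 & g2 & g3 & HS).
    exists g0, g2, g1, g3. now apply is_solution_swap.
Qed.

Lemma Rpower_pow40_roots L : 0 < L ->
  Rpower (L ^ 40) (1 / 40) = L /\ Rpower (L ^ 40) (- (3 / 40)) = / L ^ 3.
Proof.
  intros HL. rewrite <- (Rpower_pow 40 L HL), !Rpower_mult, INR_IZR_INZ. simpl Z.of_nat.
  replace (IZR 40 * (1 / 40)) with 1 by field.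
  replace (IZR 40 * - (3 / 40)) with (- INR 3) by (simpl; field).
  now rewrite Rpower_1, Rpower_Ropp, Rpower_pow.
Qed.

Theorem theorem5p6 (h0 h1 h2 h3 : R)
  (H0 : 0 < h0) (H1 : 0 < h1) (H2 : 0 < h2) (H3 : 0 < h3) :
  let deth := h0 * h1 * h2 * h3 in
  let eta := eta_of h1 h2 in
  (exists g0 g1 g2 g3 : R -> R, is_solution h0 h1 h2 h3 g0 g1 g2 g3) /\
  (forall g0 g1 g2 g3 : R -> R, is_solution h0 h1 h2 h3 g0 g1 g2 g3 ->
     (forall s t, 0 <= s -> s <= t -> g3 s <= g3 t) /\
     (forall t, 0 <= t ->
        (g1 t * g2 t) ^ 25 =
        eta * (g2 t + g1 t) ^ 4 * (2 * g2 t ^ 2 - g1 t * g2 t + 2 * g1 t ^ 2) ^ 3) /\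
     tends_at_infty g1 (Rpower (432 * eta) (1 / 40)) /\
     tends_at_infty g2 (Rpower (432 * eta) (1 / 40)) /\
     tends_at_infty g0
       (sqrt (h0 ^ 3 * h3 / deth) * Rpower (432 * eta) (1 / 40)) /\
     tends_at_infty g3
       (sqrt (deth ^ 3 / (h0 ^ 3 * h3)) * Rpower (432 * eta) (- (3 / 40))) /\
     (h1 = h2 -> forall t, 0 <= t ->
        g0 t = h0 /\ g1 t = h1 /\ g2 t = h2 /\ g3 t = h3) /\
     (h1 < h2 ->
        (forall t, 0 <= t -> g1 t < g2 t) /\
        (forall s t, 0 <= s -> s < t -> g1 s < g1 t) /\
        (forall s t, 0 <= s -> s < t -> g2 t < g2 s))).
Proof.
  intros deth eta. split; [now apply solution_exists|].
  intros g0 g1 g2 g3 HS.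
  destruct (sol_common_limit _ _ _ _ H0 H1 H2 H3 _ _ _ _ HS) as (L & HL & T1 & T2).
  assert (E40 : 432 * eta = L ^ 40)
    by (symmetry; exact (sol_limit_pow40 _ _ _ _ H0 H1 H2 H3 _ _ _ _ HS L HL T1 T2)).
  rewrite E40. destruct (Rpower_pow40_roots L HL) as [-> ->].
  split; [|split; [|split; [|split; [|split; [|split; [|split]]]]]].
  - exact (sol_g3_nondecreasing _ _ _ _ H0 H1 H2 H3 _ _ _ _ HS).
  - exact (sol_eta_identity _ _ _ _ H0 H1 H2 H3 _ _ _ _ HS).
  - exact T1.
  - exact T2.
  - exact (sol_g0_limit _ _ _ _ H0 H1 H2 H3 _ _ _ _ HS L HL T1 T2).
  - exact (sol_g3_limit _ _ _ _ H0 H1 H2 H3 _ _ _ _ HS L HL T1 T2).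
  - exact (sol_const_of_eq _ _ _ _ _ _ _ _ HS).
  - intros Hlt. split; [|split].
    + exact (sol_gap_pos _ _ _ _ _ _ _ _ HS Hlt).
    + exact (sol_g1_increasing _ _ _ _ H0 H1 H2 H3 _ _ _ _ HS Hlt).
    + exact (sol_g2_decreasing _ _ _ _ H0 H1 H2 H3 _ _ _ _ HS Hlt).
Qed.
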